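(* In the root system $B_n$, every quartet $\{r_1, r, s, s_1\}$ is simple, i.e. if $s - r_1$ is a root then $|s - r_1| = |s|$, and if $r - r_1$ is a root then $|r - r_1| = |r|$; moreover the roots $r_1 + s_1$ and $s_1$ have the same length.
   Context: $|v|$ denotes the length of $v$ with respect to the Tits (Killing) form. Fix simple roots of $B_n$; the height of a root is the sum of its coefficients in the simple roots. The regular ordering $\prec$ of positive roots orders them by height, and roots of equal height lexicographically by coefficient vectors. An ordered pair $\{r,s\}$ of positive roots is special if $r+s\in\varPhi$ and $0\prec r\prec s$; a special pair $\{r_1,s_1\}$ is extraspecial if $r_1 \preceq r$ for every special pair $\{r,s\}$ with $r+s=r_1+s_1$. A quartet is an ordered set $\{r_1,r,s,s_1\}$ where $\{r_1,s_1\}$ is extraspecial, $\{r,s\}$ is a special, non-extraspecial pair with $r+s=r_1+s_1$, and $0\prec r_1\prec r\prec s\prec s_1$. *)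

(* Root system B_n, roots encoded by their coefficient
   vectors (in 'rV[int]_n) w.r.t. the simple roots
   alpha_0 = e_0 (the short simple root), alpha_k = e_k - e_{k-1} (1 <= k < n).
   (Dynkin diagram  alpha_0 => alpha_1 - ... - alpha_{n-1}.) *)
From mathcomp Require Import all_boot all_order all_algebra.
Set Implicit Arguments. Unset Strict Implicit. Unset Printing Implicit Defensive.
Import Order.TTheory GRing.Theory Num.Theory.
Local Open Scope ring_scope.

(* Orthonormal (e-basis) coordinates of  sum_i c_i alpha_i :
   coordinate k equals c_k - c_{k+1} (with c_n = 0). *)
Definition ecoord (n : nat) (c : 'rV[int]_n) (k : 'I_n) : int :=
  c 0 k - \sum_(i < n | (nat_of_ord i == (nat_of_ord k).+1)%N) c 0 i.

Definition is_root (n : nat) (c : 'rV[int]_n) : Prop :=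
  (exists i : 'I_n, ecoord c i \in [:: 1; -1] /\
      forall j : 'I_n, j != i -> ecoord c j = 0)
  \/ (exists i j : 'I_n, i != j /\ ecoord c i \in [:: 1; -1] /\
      ecoord c j \in [:: 1; -1] /\
      forall k : 'I_n, k != i -> k != j -> ecoord c k = 0).

(* squared length |c|^2 w.r.t. the invariant (Killing/Tits) form, normalised
   so that the e_i are orthonormal (lengths are compared only, so the
   normalisation is irrelevant). *)
Definition norm2 (n : nat) (c : 'rV[int]_n) : int :=
  \sum_(k < n) ecoord c k ^+ 2.

Definition pos_root (n : nat) (c : 'rV[int]_n) : Prop :=
  is_root c /\ forall i : 'I_n, 0 <= c 0 i.

Definition height (n : nat) (c : 'rV[int]_n) : int := \sum_(i < n) c 0 i.

Definition lexlt (n : nat) (c d : 'rV[int]_n) : Prop :=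
  exists k : 'I_n, (forall i : 'I_n, (i < k)%N -> c 0 i = d 0 i) /\ c 0 k < d 0 k.

Definition prec (n : nat) (c d : 'rV[int]_n) : Prop :=
  height c < height d \/ (height c = height d /\ lexlt c d).

Definition preceq (n : nat) (c d : 'rV[int]_n) : Prop := c = d \/ prec c d.

Definition special (n : nat) (r s : 'rV[int]_n) : Prop :=
  pos_root r /\ pos_root s /\ is_root (r + s) /\ prec 0 r /\ prec r s.

Definition extraspecial (n : nat) (r1 s1 : 'rV[int]_n) : Prop :=
  special r1 s1 /\
  forall r s : 'rV[int]_n, special r s -> r + s = r1 + s1 -> preceq r1 r.

Definition quartet (n : nat) (r1 r s s1 : 'rV[int]_n) : Prop :=
  extraspecial r1 s1 /\ special r s /\ ~ extraspecial r s /\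
  r + s = r1 + s1 /\
  prec 0 r1 /\ prec r1 r /\ prec r s /\ prec s s1.

(* A short positive root e_i has coefficient 1 at alpha_0.  If the first root r1 of the
   extraspecial pair of a quartet were short, the positive root t = r1 + s1 would have
   alpha_0-coefficient at least 1 and height at least 4, hence be e_j or e_j + e_m (not
   e_j - e_m, whose alpha_0-coefficient is 0), other than e_0 + e_1.  Such a t is
   alpha_k + u with k > 0 and u a positive root, and the special pair (alpha_k, u)
   precedes (r1, s1), contradicting extraspecialness.  So r1 is long, and adding a long
   root to a root x preserves its length whenever the sum is a root: the squared
   lengths differ by 2 + 2 (x, r1), which is even, while root lengths are 1 and 2. *)

From mathcomp Require Import all_boot all_order all_algebra zify ring.
Set Implicit Arguments. Unset Strict Implicit. Unset Printing Implicit Defensive.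
Import Order.TTheory GRing.Theory Num.Theory.
Local Open Scope ring_scope.

Lemma exists_ord_pred n (j : 'I_n) : (0 < j)%N -> exists i : 'I_n, j = i.+1 :> nat.
Proof. by case: j => [[|i] lt_in] // _; exists (Ordinal (ltnW lt_in)). Qed.

Section Coordinates.
Variable n : nat.
Implicit Types (c d : 'rV[int]_n) (i j k : 'I_n).

Lemma ecoord_next c k j : j = k.+1 :> nat -> ecoord c k = c 0 k - c 0 j.
Proof.
move=> jk; rewrite /ecoord (bigD1 j) ?jk //= big1 ?addr0 // => i /andP[/eqP ik ij].
by case/eqP: ij; apply: val_inj; rewrite /= ik jk.
Qed.

Lemma ecoord_last c k : (n <= k.+1)%N -> ecoord c k = c 0 k.
Proof. by move=> kn; rewrite /ecoord big1 ?subr0 // => i /eqP ik; have := ltn_ord i; lia. Qed.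

Lemma ecoordD c d k : ecoord (c + d) k = ecoord c k + ecoord d k.
Proof.
rewrite /ecoord mxE (eq_bigr (fun i => c 0 i + d 0 i)) => [|i _]; last by rewrite mxE.
by rewrite big_split /= opprD addrACA.
Qed.

Lemma ecoordZ (x : int) c k : ecoord (x *: c) k = x * ecoord c k.
Proof.
rewrite /ecoord mxE (eq_bigr (fun i => x * c 0 i)) => [|i _]; last by rewrite mxE.
by rewrite -mulr_sumr mulrBr.
Qed.

Lemma ecoordB c d k : ecoord (c - d) k = ecoord c k - ecoord d k.
Proof. by rewrite -scaleN1r ecoordD ecoordZ mulN1r. Qed.

Lemma ecoord_eq0 c : (forall k, ecoord c k = 0) -> c = 0.
Proof.
move=> c0; suff coef0 m k : (n <= k + m.+1)%N -> c 0 k = 0.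
  by apply/rowP => k; rewrite mxE (coef0 n) //; lia.
elim: m k => [|m IHm] k km; first by rewrite -ecoord_last ?c0 //; lia.
have [kn|kn] := leqP n k.+1; first by rewrite -ecoord_last ?c0.
have := c0 k; rewrite (@ecoord_next _ _ (Ordinal kn)) // (IHm (Ordinal kn)) ?subr0 //=; lia.
Qed.

Lemma ecoord_inj c d : (forall k, ecoord c k = ecoord d k) -> c = d.
Proof. by move=> cd; apply/subr0_eq/ecoord_eq0 => k; rewrite ecoordB cd subrr. Qed.

(* The coefficient vector of e_a = alpha_0 + ... + alpha_a. *)
Definition evec (a : 'I_n) : 'rV[int]_n := \row_k (if (k <= a)%N then 1 else 0).

Lemma evec_ge0 a k : 0 <= evec a 0 k.
Proof. by rewrite mxE; case: ifP. Qed.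

Lemma ecoord_evec a k : ecoord (evec a) k = if k == a then 1 else 0.
Proof.
rewrite -val_eqE /=; have := ltn_ord a; have [kn|kn] := leqP n k.+1.
  by rewrite ecoord_last // mxE; do 2!case: ifP; lia.
by rewrite (@ecoord_next _ _ (Ordinal kn)) // !mxE /=; do 3!case: ifP; lia.
Qed.

Lemma evec_succ i j : j = i.+1 :> nat -> evec j = evec i + delta_mx 0 j.
Proof.
move=> ji; apply/rowP => k; rewrite !mxE eqxx -val_eqE /= ji.
by case: eqP; do 2!case: ifP; lia.
Qed.

Lemma ecoord_supp1 c i : (forall j, j != i -> ecoord c j = 0) -> c = ecoord c i *: evec i.
Proof.
move=> supp; apply: ecoord_inj => k; rewrite ecoordZ ecoord_evec.
by have [-> | /supp ->] := eqVneq k i; rewrite ?mulr1 ?mulr0.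
Qed.

Lemma ecoord_supp2 c i j : i != j -> (forall k, k != i -> k != j -> ecoord c k = 0) ->
  c = ecoord c i *: evec i + ecoord c j *: evec j.
Proof.
move=> ij supp; apply: ecoord_inj => k; rewrite ecoordD !ecoordZ !ecoord_evec.
have [-> | ki] := eqVneq k i; first by rewrite (negbTE ij) mulr1 mulr0 addr0.
have [-> | kj] := eqVneq k j; first by rewrite mulr1 mulr0 add0r.
by rewrite supp // !mulr0 addr0.
Qed.

Lemma norm2_short c i : ecoord c i \in [:: 1; -1] ->
  (forall j, j != i -> ecoord c j = 0) -> norm2 c = 1.
Proof.
move=> ci supp; rewrite /norm2 (bigD1 i) //= big1 ?addr0 => [|j /supp ->]; last exact: expr0n.
by move: ci; rewrite !inE => /orP[] /eqP ->.
Qed.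

Lemma norm2_long c i j : i != j -> ecoord c i \in [:: 1; -1] -> ecoord c j \in [:: 1; -1] ->
  (forall k, k != i -> k != j -> ecoord c k = 0) -> norm2 c = 2.
Proof.
move=> ij ci cj supp; rewrite /norm2 (bigD1 i) //= (bigD1 j) 1?eq_sym //= big1 ?addr0.
  by move: ci cj; rewrite !inE => /orP[] /eqP -> /orP[] /eqP ->.
by move=> k /andP[ki kj]; rewrite supp // expr0n.
Qed.

Lemma norm2_root c : is_root c -> norm2 c = 1 \/ norm2 c = 2.
Proof.
by case=> [[i [ci supp]] | [i [j [ij [ci [cj supp]]]]]];
  [left; exact: norm2_short ci supp | right; exact: norm2_long ij ci cj supp].
Qed.

Lemma norm2D c d :
  norm2 (c + d) = norm2 c + norm2 d + 2 * \sum_k ecoord c k * ecoord d k.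
Proof.
rewrite /norm2 mulr_sumr -!big_split /=; apply: eq_bigr => k _.
by rewrite ecoordD; ring.
Qed.

Lemma norm2_add_long c d : norm2 d = 2 -> is_root c -> is_root (c + d) ->
  norm2 (c + d) = norm2 c.
Proof. by move=> d2 /norm2_root c12 /norm2_root; rewrite norm2D d2; lia. Qed.

Lemma pm1_ge0 (x : int) : x \in [:: 1; -1] -> 0 <= x -> x = 1.
Proof. by rewrite !inE => /orP[] /eqP ->. Qed.

Lemma pos_root_single c i : (forall k, 0 <= c 0 k) -> ecoord c i \in [:: 1; -1] ->
  (forall j, j != i -> ecoord c j = 0) -> c = evec i.
Proof.
move=> c_ge0 ci supp; have cE := ecoord_supp1 supp.
suff ci1 : ecoord c i = 1 by rewrite cE ci1 scale1r.
by apply: (pm1_ge0 ci); move: (c_ge0 i); rewrite {1}cE !mxE leqnn mulr1.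
Qed.

Lemma pos_root_pair c i j : (forall k, 0 <= c 0 k) -> (i < j)%N ->
  ecoord c i \in [:: 1; -1] -> ecoord c j \in [:: 1; -1] ->
  (forall k, k != i -> k != j -> ecoord c k = 0) ->
  c = evec j + evec i \/ c = evec j - evec i.
Proof.
move=> c_ge0 ij ci cj supp.
have cE : c = _ := ecoord_supp2 (negbT (ltn_eqF ij)) supp.
have cj1 : ecoord c j = 1.
  by apply: (pm1_ge0 cj); move: (c_ge0 j); rewrite {1}cE !mxE leqnn leqNgt ij mulr0 add0r mulr1.
rewrite cj1 scale1r addrC in cE; move: ci; rewrite !inE => /orP[] /eqP ci.
- by left; rewrite cE ci scale1r.
- by right; rewrite cE ci scaleN1r.
Qed.

Lemma pos_root_cases c : pos_root c -> (exists i, c = evec i) \/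
  exists i j, (i < j)%N /\ (c = evec j + evec i \/ c = evec j - evec i).
Proof.
case=> [[[i [ci supp]] | [i [j [ij [ci [cj supp]]]]]] c_ge0].
  by left; exists i; exact: pos_root_single ci supp.
right; have [lt_ij | lt_ji | eq_ij] := ltngtP i j.
- by exists i, j; split=> //; exact: pos_root_pair.
- by exists j, i; split=> //; apply: pos_root_pair => // k kj ki; exact: supp.
- by case/eqP: ij; apply: val_inj.
Qed.

Lemma is_root_evec2 i j (x y : int) : i != j -> x \in [:: 1; -1] -> y \in [:: 1; -1] ->
  is_root (x *: evec i + y *: evec j).
Proof.
move=> ij x1 y1; right; exists i, j; split=> //; have ji : j != i by rewrite eq_sym.
rewrite !ecoordD !ecoordZ !ecoord_evec !eqxx (negbTE ij) (negbTE ji).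
rewrite !mulr1 !mulr0 addr0 add0r.
do 2 split=> //; move=> k ki kj.
by rewrite ecoordD !ecoordZ !ecoord_evec (negbTE ki) (negbTE kj) !mulr0 addr0.
Qed.

Lemma pos_root_evec i : pos_root (evec i).
Proof.
split; last exact: evec_ge0.
left; exists i; rewrite ecoord_evec eqxx; split=> // j ji.
by rewrite ecoord_evec (negbTE ji).
Qed.

Lemma pos_root_evecD i j : i != j -> pos_root (evec j + evec i).
Proof.
move=> ij; split; last by move=> k; rewrite mxE addr_ge0 ?evec_ge0.
by rewrite -[evec j]scale1r -[evec i]scale1r; apply: is_root_evec2; rewrite ?inE // eq_sym.
Qed.

Lemma pos_root_evecB i j : (i < j)%N -> pos_root (evec j - evec i).
Proof.
move=> ij; split; last by move=> k; rewrite !mxE; do 2!case: ifP; lia.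
rewrite -[evec j]scale1r -scaleN1r; apply: is_root_evec2; rewrite ?inE //.
by rewrite eq_sym -val_eqE /= ltn_eqF.
Qed.

Lemma pos_root_delta i j : j = i.+1 :> nat -> pos_root (delta_mx 0 j).
Proof.
move=> ji; have -> : delta_mx 0 j = evec j - evec i by rewrite (evec_succ ji) addrC addKr.
by apply: pos_root_evecB; rewrite ji.
Qed.

Lemma heightD c d : height (c + d) = height c + height d.
Proof. by rewrite /height -big_split; apply: eq_bigr => i _; rewrite mxE. Qed.

Lemma height0 : height (0 : 'rV[int]_n) = 0.
Proof. by rewrite /height big1 // => i _; rewrite mxE. Qed.

Lemma height_delta k : height (delta_mx 0 k : 'rV[int]_n) = 1.
Proof.
rewrite /height (bigD1 k) //= big1 ?addr0 => [|i ik]; first by rewrite mxE !eqxx.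
by rewrite mxE (negbTE ik) andbF.
Qed.

Lemma coef_le_height c k : (forall i, 0 <= c 0 i) -> c 0 k <= height c.
Proof. by move=> c_ge0; rewrite /height (bigD1 k) //= lerDl sumr_ge0. Qed.

Lemma coef2_le_height c k l : (forall i, 0 <= c 0 i) -> k != l -> c 0 k + c 0 l <= height c.
Proof.
move=> c_ge0 kl; rewrite /height (bigD1 k) //= (bigD1 l) 1?eq_sym //=.
by rewrite addrA lerDl sumr_ge0.
Qed.

Lemma prec_height c d : prec c d -> height c <= height d.
Proof. by case=> [/ltW | [-> _]]. Qed.

End Coordinates.

Section QuartetsOfB.
Variable n : nat.
Implicit Types (c d u : 'rV[int]_n.+1) (i j k : 'I_n.+1).

Lemma evec0 : evec (ord0 : 'I_n.+1) = delta_mx 0 ord0.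
Proof. by apply/rowP => k; rewrite !mxE eqxx -val_eqE /= leqn0; case: eqP. Qed.

Lemma evec_head i : evec i 0 ord0 = 1.
Proof. by rewrite mxE. Qed.

Lemma delta_head k : (0 < k)%N -> (delta_mx 0 k : 'rV[int]_n.+1) 0 ord0 = 0.
Proof. by move=> k_gt0; rewrite mxE eqxx -val_eqE /= eq_sym gtn_eqF. Qed.

Lemma lexlt_head c d : lexlt c d -> c 0 ord0 <= d 0 ord0.
Proof.
case=> k [eq_lt lt_k]; have [k0 | k_gt0] := posnP k; last by rewrite eq_lt.
have k_ord0 : k = ord0 by apply: val_inj; rewrite /= k0.
by rewrite -k_ord0; exact: ltW.
Qed.

Lemma prec_by_head c d : height c <= height d -> c 0 ord0 < d 0 ord0 -> prec c d.
Proof.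
rewrite le_eqVlt => /orP[/eqP eq_height | lt_height] lt_head; last by left.
by right; split=> //; exists ord0.
Qed.

Lemma special_delta k u : (0 < k)%N -> pos_root u -> 1 <= u 0 ord0 ->
  is_root (delta_mx 0 k + u) -> special (delta_mx 0 k) u.
Proof.
move=> k_gt0 u_pos u_head t_root; have [i ki] := exists_ord_pred k_gt0.
split; first exact: pos_root_delta ki.
do 3 split=> //; first by left; rewrite height0 height_delta.
apply: prec_by_head; last by rewrite delta_head.
by rewrite height_delta (le_trans u_head) // coef_le_height //; case: u_pos.
Qed.

Lemma extraspecial_delta (r1 s1 : 'rV[int]_n.+1) k :
  extraspecial r1 s1 -> r1 0 ord0 = 1 -> (0 < k)%N -> ~ pos_root (r1 + s1 - delta_mx 0 k).
Proof.
move=> [[[_ r1_ge0] [[_ s1_ge0] [t_root _]]] r1_min] r1_head k_gt0 u_pos.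
have u_head : 1 <= (r1 + s1 - delta_mx 0 k) 0 ord0.
  by move: (delta_head k_gt0); rewrite !mxE => ->; rewrite subr0 r1_head lerDl.
have sum_eq : delta_mx 0 k + (r1 + s1 - delta_mx 0 k) = r1 + s1 by rewrite addrC subrK.
have sp : special (delta_mx 0 k) (r1 + s1 - delta_mx 0 k).
  by apply: special_delta; rewrite ?sum_eq.
case: (r1_min _ _ sp sum_eq) => [r1E | [lt_height | [_ /lexlt_head]]].
- by move: r1_head; rewrite r1E delta_head.
- by move: lt_height; rewrite height_delta ltNge -r1_head coef_le_height.
- by rewrite r1_head delta_head.
Qed.

Lemma prec_height_ge2 (r1 r : 'rV[int]_n.+1) :
  (forall i, 0 <= r1 0 i) -> (forall i, 0 <= r 0 i) -> r1 0 ord0 = 1 -> prec r1 r ->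
  2 <= height r.
Proof.
move=> r1_ge0 r_ge0 r1_head; have := coef_le_height ord0 r1_ge0.
rewrite r1_head => r1_height [lt_height | [_ [k [eq_lt lt_k]]]]; first lia.
have [k0 | k_gt0] := posnP k.
  have k_ord0 : k = ord0 by apply: val_inj; rewrite /= k0.
  by have := coef_le_height ord0 r_ge0; move: lt_k; rewrite k_ord0 r1_head; lia.
have k_ne0 : ord0 != k by rewrite -val_eqE /= neq_ltn k_gt0.
have := coef2_le_height r_ge0 k_ne0; have := r1_ge0 k.
by move: lt_k; rewrite -(eq_lt ord0 k_gt0) r1_head; lia.
Qed.

Lemma quartet_height (r1 r s s1 : 'rV[int]_n.+1) :
  quartet r1 r s s1 -> r1 0 ord0 = 1 -> 4 <= height (r1 + s1).
Proof.
move=> [[[[_ r1_ge0] _] _] [[[_ r_ge0] _] [_ [sum_eq [_ [r1r [rs _]]]]]]] r1_head.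
have := prec_height_ge2 r1_ge0 r_ge0 r1_head r1r.
by have := prec_height rs; rewrite -sum_eq heightD; lia.
Qed.

Lemma pos_root_sub_delta (t : 'rV[int]_n.+1) :
  pos_root t -> 1 <= t 0 ord0 -> 4 <= height t ->
  exists2 k : 'I_n.+1, (0 < k)%N & pos_root (t - delta_mx 0 k).
Proof.
move=> t_pos t_head t_height.
case: (pos_root_cases t_pos) => [[j tE] | [m [j [lt_mj [tE | tE]]]]].
- have [j0 | j_gt0] := posnP j.
    have j_ord0 : j = ord0 by apply: val_inj; rewrite /= j0.
    by move: t_height; rewrite tE j_ord0 evec0 height_delta.
  have [i ji] := exists_ord_pred j_gt0; exists j => //.
  by rewrite tE (evec_succ ji) addrK; exact: pos_root_evec.
- have j_gt0 := leq_ltn_trans (leq0n m) lt_mj; have [i ji] := exists_ord_pred j_gt0.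
  have [m0 | m_gt0] := posnP m; last first.
    have [m' mm'] := exists_ord_pred m_gt0; exists m => //.
    rewrite tE (evec_succ mm') addrA addrK; apply: pos_root_evecD.
    by rewrite -val_eqE /=; lia.
  have [i0 | i_gt0] := posnP i; last first.
    exists j => //; rewrite tE (evec_succ ji) addrAC addrK; apply: pos_root_evecD.
    by rewrite -val_eqE /=; lia.
  have m_ord0 : m = ord0 by apply: val_inj; rewrite /= m0.
  have i_ord0 : i = ord0 by apply: val_inj; rewrite /= i0.
  by move: t_height; rewrite tE (evec_succ ji) m_ord0 i_ord0 evec0 !heightD !height_delta.
- by move: t_head; rewrite tE !mxE.
Qed.

Lemma quartet_first_long (r1 r s s1 : 'rV[int]_n.+1) : quartet r1 r s s1 -> norm2 r1 = 2.
Proof.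
move=> q; have ext := proj1 q; have [[[r1_root r1_ge0] [[_ s1_ge0] [t_root _]]] _] := ext.
case: r1_root => [[i [r1i supp]] | [i [j [ij [r1i [r1j supp]]]]]]; last first.
  exact: norm2_long ij r1i r1j supp.
have r1_head : r1 0 ord0 = 1 by rewrite (pos_root_single r1_ge0 r1i supp) evec_head.
have t_pos : pos_root (r1 + s1) by split=> // k; rewrite mxE addr_ge0.
have t_head : 1 <= (r1 + s1) 0 ord0 by rewrite mxE r1_head lerDl.
have [k k_gt0 u_pos] := pos_root_sub_delta t_pos t_head (quartet_height q r1_head).
by case: (extraspecial_delta ext r1_head k_gt0 u_pos).
Qed.

End QuartetsOfB.

Theorem mainTheorem4 (n : nat) (r1 r s s1 : 'rV[int]_n) :
  quartet r1 r s s1 ->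
  (is_root (s - r1) -> norm2 (s - r1) = norm2 s) /\
  (is_root (r - r1) -> norm2 (r - r1) = norm2 r) /\
  norm2 (r1 + s1) = norm2 s1.
Proof.
case: n r1 r s s1 => [|n] r1 r s s1 q.
  by case: q => [[[[[[i _] | [i _]] _] _] _] _]; case: i.
have r1_long := quartet_first_long q.
have [[[_ [[s1_root _] [t_root _]]] _] [[[r_root _] [[s_root _] _]] _]] := q.
split; [|split] => [diff_root | diff_root |].
- by rewrite -(norm2_add_long r1_long diff_root) subrK.
- by rewrite -(norm2_add_long r1_long diff_root) subrK.
- have t_root' : is_root (s1 + r1) by rewrite addrC.
  by rewrite addrC norm2_add_long.
Qed.
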